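(* Let $0\le q_0<q_1\le 1$, let $f_N^{(i)}$ and $F_N^{(i)}$ denote the probability mass function and cumulative distribution function of the binomial distribution $\mathrm{Bin}(N,q_i)$, $i\in\{0,1\}$, and let $N_R=N_R(N)$ be positive integers with $N_R\in\mathcal O(N)$. Define $$S_N=\sum_{k=1}^{N} f_N^{(1)}[k]\,\big(F_N^{(0)}[k-1]\big)^{N_R}.$$ Then $\lim_{N\to\infty}S_N=1$. *)

From HB Require Import structures.
From mathcomp Require Import all_boot all_order all_algebra.
From mathcomp Require Import all_classical all_reals all_analysis.
Set Implicit Arguments. Unset Strict Implicit. Unset Printing Implicit Defensive.
Import Order.TTheory GRing.Theory Num.Theory.
Local Open Scope ring_scope.

(* probability mass function of Bin(N, q) at k (0 for k > N since 'C(N,k)=0) *)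
Definition binom_pmf (R : realType) (N : nat) (q : R) (k : nat) : R :=
  'C(N, k)%:R * q ^+ k * (1 - q) ^+ (N - k).

Definition binom_cdf (R : realType) (N : nat) (q : R) (k : nat) : R :=
  \sum_(0 <= j < k.+1) binom_pmf N q j.

Definition S_seq (R : realType) (q0 q1 : R) (NR : nat -> nat) (N : nat) : R :=
  \sum_(1 <= k < N.+1) binom_pmf N q1 k * (binom_cdf N q0 k.-1) ^+ (NR N).

From mathcomp Require Import all_boot all_order all_algebra.
From mathcomp Require Import all_classical all_reals all_analysis.
From mathcomp Require Import ring lra.
Set Implicit Arguments. Unset Strict Implicit. Unset Printing Implicit Defensive.
Import Order.TTheory GRing.Theory Num.Theory.
Import numFieldNormedType.Exports.
Local Open Scope classical_set_scope.
Local Open Scope ring_scope.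

(* Fix p strictly between q0 and q1. By Chernoff bounds, a Bin(N, q0) variable
   exceeds p N and a Bin(N, q1) variable falls below p N with probabilities
   O(exp (- d N)). Keeping only the terms k >= p N of S_N, each factor
   F0[k-1] is at least 1 - O(exp (- d N)), so by Bernoulli's inequality its
   N_R-th power is at least 1 - N_R O(exp (- d N)) = 1 - O(N exp (- d N)).
   Hence 1 - O(N exp (- d N)) <= S_N <= 1. *)

Lemma ler_sum_subset (R : numDomainType) (I : Type) (r : seq I) (P Q : pred I)
    (F : I -> R) :
  (forall i, Q i -> 0 <= F i) -> (forall i, P i -> Q i) ->
  \sum_(i <- r | P i) F i <= \sum_(i <- r | Q i) F i.
Proof.
move=> F_ge0 PQ; rewrite [X in _ <= X](bigID P) /=.
rewrite (eq_bigl P) => [|i]; last by case: (boolP (P i)) => Pi; rewrite ?andbT ?andbF ?PQ.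
by rewrite lerDl sumr_ge0 // => i /andP[/F_ge0].
Qed.

Lemma bernoulli_ineq (R : realFieldType) (y : R) n :
  0 <= y -> 1 - n%:R * (1 - y) <= y ^+ n.
Proof.
move=> y0; elim: n => [|n IH]; first by rewrite mul0r subr0 expr0.
rewrite exprS -natr1.
have : y * (1 - n%:R * (1 - y)) <= y * y ^+ n by rewrite ler_wpM2l.
have : 0 <= n%:R * (1 - y) ^+ 2 :> R by rewrite mulr_ge0 // sqr_ge0.
nra.
Qed.

Section ExpBounds.
Variable R : realType.

Lemma exprn_le_expR (y : R) n : 0 <= 1 + y -> (1 + y) ^+ n <= expR (n%:R * y).
Proof.
move=> y_ge0; rewrite expRM_natl; apply: lerXn2r; rewrite ?nnegrE ?expR_ge0 //.
exact: expR_ge1Dx.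
Qed.

Lemma expR_sub1_le (s : R) : s < 1 -> expR s - 1 <= s / (1 - s).
Proof.
move=> s_lt1; have s1_gt0 : 0 < 1 - s by rewrite subr_gt0.
rewrite ler_pdivlMr //.
have := expR_ge1Dx (- s).
have : expR s * expR (- s) = 1 by rewrite expRxMexpNx_1.
have := expR_ge0 s.
nra.
Qed.

Lemma sqr_mul_expRN_le2 (x : R) : 0 <= x -> x ^+ 2 * expR (- x) <= 2.
Proof.
move=> x_ge0; have := expR_ge1Dxn 1 x_ge0; rewrite (_ : 2`!%:R = 2) // => ex.
have : (2 + x ^+ 2) * expR (- x) <= 2 * expR x * expR (- x).
  by rewrite ler_wpM2r ?expR_ge0 //; lra.
rewrite -mulrA expRxMexpNx_1 mulr1.
have := expR_gt0 (- x).
nra.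
Qed.

End ExpBounds.

Definition binom_upper_tail (R : realType) (N : nat) (q x : R) : R :=
  \sum_(0 <= k < N.+1 | x <= k%:R) binom_pmf N q k.

Definition binom_lower_tail (R : realType) (N : nat) (q x : R) : R :=
  \sum_(0 <= k < N.+1 | k%:R < x) binom_pmf N q k.

Section Binomial.
Variable R : realType.
Implicit Types (q x : R) (N k : nat).

Lemma binom_pmf_ge0 q N k : 0 <= q <= 1 -> 0 <= binom_pmf N q k.
Proof. by case/andP=> q_ge0 q_le1; rewrite !mulr_ge0 ?exprn_ge0 ?subr_ge0. Qed.

Lemma binom_pmf_gen q N (a : R) :
  \sum_(0 <= k < N.+1) binom_pmf N q k * a ^+ k = (1 - q + q * a) ^+ N.
Proof.
rewrite big_mkord exprDn; apply: eq_bigr => k _.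
rewrite /binom_pmf -mulr_natl exprMn; ring.
Qed.

Lemma binom_pmf_sum1 q N : \sum_(0 <= k < N.+1) binom_pmf N q k = 1.
Proof.
rewrite -[RHS](expr1n _ N) -[1 in RHS](_ : 1 - q + q * 1 = 1); last by ring.
by rewrite -binom_pmf_gen; apply: eq_bigr => k _; rewrite expr1n mulr1.
Qed.

Lemma binom_pmfC q N k : (k <= N)%N ->
  binom_pmf N q k = binom_pmf N (1 - q) (N - k).
Proof.
move=> kN; rewrite /binom_pmf bin_sub // subKn // (_ : 1 - (1 - q) = q); last by ring.
by rewrite mulrAC.
Qed.

Lemma binom_cdf_ge0 q N k : 0 <= q <= 1 -> 0 <= binom_cdf N q k.
Proof. by move=> q01; rewrite sumr_ge0 // => j _; rewrite binom_pmf_ge0. Qed.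

Lemma binom_cdfDtail q N k : (k <= N)%N ->
  binom_cdf N q k + \sum_(k.+1 <= j < N.+1) binom_pmf N q j = 1.
Proof. by move=> kN; rewrite /binom_cdf -big_cat_nat // binom_pmf_sum1. Qed.

Lemma binom_cdf_le1 q N k : 0 <= q <= 1 -> (k <= N)%N -> binom_cdf N q k <= 1.
Proof.
move=> q01 kN; rewrite -(@binom_cdfDtail q N k kN) lerDl.
by rewrite sumr_ge0 // => j _; rewrite binom_pmf_ge0.
Qed.

Lemma binom_tailsD q N x : binom_lower_tail N q x + binom_upper_tail N q x = 1.
Proof.
rewrite -(binom_pmf_sum1 q N) [RHS](bigID (fun k => x <= k%:R)) addrC.
by congr (_ + _); apply: eq_bigl => k; rewrite ltNge.
Qed.

Lemma binom_lower_tail_le_upper q N x : 0 <= q <= 1 ->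
  binom_lower_tail N q x <= binom_upper_tail N (1 - q) (N%:R - x).
Proof.
move=> q01; rewrite /binom_lower_tail big_nat_rev /= add0n.
rewrite big_nat_cond [X in _ <= X]big_nat_cond.
apply: (@le_trans _ _ (\sum_(0 <= k < N.+1 | (0 <= k < N.+1)%N && (N%:R - x <= k%:R))
                       binom_pmf N q (N.+1 - k.+1))).
  apply: ler_sum_subset => [k _|k /andP[/andP[_ kN]]]; first exact: binom_pmf_ge0.
  rewrite leq0n kN subSS natrB; last by rewrite -ltnS.
  by rewrite andTb => ?; lra.
apply: ler_sum => k /andP[/andP[_ kN] _].
by rewrite subSS binom_pmfC ?leq_subr // subKn // -ltnS.
Qed.
Lemma binom_upper_tail_le_mgf q N x (s : R) : 0 <= q <= 1 -> 0 <= s ->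
  binom_upper_tail N q x <= expR (- (s * x)) * (1 - q + q * expR s) ^+ N.
Proof.
move=> q01 s_ge0; rewrite -binom_pmf_gen mulr_sumr.
have tiltE k : expR (- (s * x)) * (binom_pmf N q k * expR s ^+ k) =
               binom_pmf N q k * expR (s * (k%:R - x)).
  by rewrite -expRM_natl mulrCA -expRD; congr (_ * expR _); ring.
under [X in _ <= X]eq_bigr do rewrite tiltE.
apply: (@le_trans _ _ (\sum_(0 <= k < N.+1 | x <= k%:R)
                       binom_pmf N q k * expR (s * (k%:R - x)))).
  apply: ler_sum => k xk; apply: ler_peMr; first exact: binom_pmf_ge0.
  by rewrite -[X in X <= _]expR0 ler_expR mulr_ge0 // subr_ge0.
by apply: ler_sum_subset => // k _; rewrite mulr_ge0 ?binom_pmf_ge0 ?expR_ge0.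
Qed.

Lemma binom_upper_tail_expR_le q p : 0 <= q -> q < p -> p <= 1 ->
  exists2 d : R, 0 < d &
    forall N, binom_upper_tail N q (p * N%:R) <= expR (- (d * N%:R)).
Proof.
move=> q_ge0 qp p_le1; pose s := (p - q) / 2; pose t := s / (1 - s).
have s_gt0 : 0 < s by rewrite divr_gt0 // subr_gt0.
have s_lt1 : s < 1 by rewrite /s; lra.
pose d := s * p - q * t.
have d_gt0 : 0 < d.
  have dE : d * (1 - s) = s * (p * (1 - s) - q).
    by rewrite /d /t; field; rewrite subr_eq0 gt_eqF.
  have : 0 < d * (1 - s).
    rewrite dE mulr_gt0 // (_ : p * (1 - s) - q = 2 * s - p * s); last by rewrite /s; field.
    by rewrite subr_gt0 mulr_natl mulr2n ltr_pwDl ?ger_pMl.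
  by rewrite pmulr_lgt0 // subr_gt0.
exists d => // N.
have q01 : 0 <= q <= 1 by apply/andP; split; lra.
apply: le_trans (binom_upper_tail_le_mgf _ _ q01 (ltW s_gt0)) _.
have mgf_le : (1 - q + q * expR s) ^+ N <= expR (N%:R * (q * t)).
  have es_ge1 : 1 <= expR s by rewrite -expR0 ler_expR ltW.
  rewrite (_ : 1 - q + q * expR s = 1 + q * (expR s - 1)); last by ring.
  apply: le_trans (exprn_le_expR _ _) _; first by rewrite addr_ge0 // mulr_ge0 // subr_ge0.
  by rewrite ler_expR ler_wpM2l // ler_wpM2l // expR_sub1_le.
apply: le_trans (ler_wpM2l (expR_ge0 _) mgf_le) _.
by rewrite -expRD (_ : _ + _ = - (d * N%:R)) //; rewrite /d; ring.
Qed.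

Lemma binom_lower_tail_expR_le q p : 0 <= p -> p < q -> q <= 1 ->
  exists2 d : R, 0 < d &
    forall N, binom_lower_tail N q (p * N%:R) <= expR (- (d * N%:R)).
Proof.
move=> p_ge0 pq q_le1.
have [|||d d_gt0 tail] := @binom_upper_tail_expR_le (1 - q) (1 - p); try lra.
exists d => // N.
have q01 : 0 <= q <= 1 by apply/andP; split; lra.
apply: le_trans (binom_lower_tail_le_upper _ _ q01) _.
by rewrite (_ : N%:R - p * N%:R = (1 - p) * N%:R) //; ring.
Qed.
Lemma binom_cdf_pred_ge_upper_tail q N x k :
  0 <= q <= 1 -> (0 < k)%N -> (k <= N)%N -> x <= k%:R ->
  1 - binom_upper_tail N q x <= binom_cdf N q k.-1.
Proof.
move=> q01 k_gt0 kN xk.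
have := @binom_cdfDtail q N k.-1 (leq_trans (leq_pred k) kN); rewrite prednK //.
suff : \sum_(k <= j < N.+1) binom_pmf N q j <= binom_upper_tail N q x by lra.
rewrite /binom_upper_tail [X in _ <= X](@big_cat_nat _ _ _ k) //=; last exact: leqW.
have -> : \sum_(k <= j < N.+1 | x <= j%:R) binom_pmf N q j =
          \sum_(k <= j < N.+1) binom_pmf N q j.
  rewrite big_mkcond; apply: eq_big_nat => j /andP[kj _].
  by rewrite ifT // (le_trans xk) // ler_nat.
by rewrite lerDr sumr_ge0 // => j _; rewrite binom_pmf_ge0.
Qed.

End Binomial.

Section SSeqBounds.
Variables (R : realType) (q0 q1 : R) (NR : nat -> nat).
Hypotheses (q0_01 : 0 <= q0 <= 1) (q1_01 : 0 <= q1 <= 1).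

Lemma S_seq_le1 N : S_seq q0 q1 NR N <= 1.
Proof.
rewrite -(binom_pmf_sum1 q1 N) big_ltn //; apply: ler_wpDl; first exact: binom_pmf_ge0.
apply: ler_sum_nat => k /andP[_ kN]; apply: ler_piMr; first exact: binom_pmf_ge0.
by rewrite exprn_ile1 ?binom_cdf_ge0 ?binom_cdf_le1 // (leq_trans (leq_pred k)).
Qed.

Lemma S_seq_ge N (p : R) : 0 < p -> (0 < N)%N ->
  1 - binom_lower_tail N q1 (p * N%:R)
    - (NR N)%:R * binom_upper_tail N q0 (p * N%:R) <= S_seq q0 q1 NR N.
Proof.
move=> p_gt0 N_gt0; set x := p * N%:R; set n := NR N.
set E := binom_upper_tail N q0 x; set T := binom_upper_tail N q1 x.
have x_gt0 : 0 < x by rewrite mulr_gt0 // ltr0n.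
pose G k := binom_pmf N q1 k * binom_cdf N q0 k.-1 ^+ n.
have G_ge0 k : 0 <= G k by rewrite mulr_ge0 ?binom_pmf_ge0 ?exprn_ge0 ?binom_cdf_ge0.
have S_ge : \sum_(0 <= k < N.+1 | x <= k%:R) G k <= S_seq q0 q1 NR N.
  rewrite big_ltn_cond // (_ : x <= 0%:R = false); last by rewrite leNgt x_gt0.
  exact: ler_sum_subset.
have T_le : T * (1 - n%:R * E) <= \sum_(0 <= k < N.+1 | x <= k%:R) G k.
  rewrite /T mulr_suml big_nat_cond [X in _ <= X]big_nat_cond.
  apply: ler_sum => k /andP[/andP[_ kN] xk].
  rewrite ler_wpM2l ?binom_pmf_ge0 //.
  have k_gt0 : (0 < k)%N by rewrite -(ltr0n R) (lt_le_trans x_gt0).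
  have := binom_cdf_pred_ge_upper_tail q0_01 k_gt0 kN xk; rewrite -/E => cdf_ge.
  apply: le_trans (bernoulli_ineq n (binom_cdf_ge0 _ _ q0_01)).
  by rewrite lerD2l lerN2; apply: ler_wpM2l => //; lra.
have L_ge0 : 0 <= binom_lower_tail N q1 x.
  by rewrite sumr_ge0 // => k _; rewrite binom_pmf_ge0.
have nE_ge0 : 0 <= n%:R * E.
  by rewrite mulr_ge0 // sumr_ge0 // => k _; rewrite binom_pmf_ge0.
have := binom_tailsD q1 N x; rewrite -/T => TE.
nra.
Qed.

Lemma S_seq_ge_expR N (p d : R) (C : nat) : 0 < p -> (0 < N)%N ->
  (NR N <= C * N)%N ->
  binom_lower_tail N q1 (p * N%:R) <= expR (- (d * N%:R)) ->
  binom_upper_tail N q0 (p * N%:R) <= expR (- (d * N%:R)) ->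
  1 - C.+1%:R * (N%:R * expR (- (d * N%:R))) <= S_seq q0 q1 NR N.
Proof.
move=> p_gt0 N_gt0 NR_le L_le U_le; apply: le_trans (S_seq_ge p_gt0 N_gt0).
set e := expR _ in L_le U_le *; set U := binom_upper_tail _ _ _ in U_le *.
have : (NR N)%:R * U <= C%:R * N%:R * e.
  rewrite ler_pM // ?sumr_ge0 // => [k _|]; first by rewrite binom_pmf_ge0.
  by rewrite -natrM ler_nat.
have : e <= N%:R * e by rewrite ler_peMl ?expR_ge0 // ler1n.
rewrite -natr1; lra.
Qed.

End SSeqBounds.

Lemma cvgn_mul_expRN (R : realType) (d : R) : 0 < d ->
  (fun N : nat => N%:R * expR (- (d * N%:R))) @ \oo --> 0.
Proof.
move=> d_gt0; apply/cvgrPdist_le => eps eps_gt0; near=> N.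
rewrite sub0r normrN ger0_norm ?mulr_ge0 ?expR_ge0 //.
have N_ge : 2 / (d ^+ 2 * eps) <= N%:R by near: N; apply: nbhs_infty_ger.
have := sqr_mul_expRN_le2 (mulr_ge0 (ltW d_gt0) (ler0n R N)).
rewrite ler_pdivrMr ?mulr_gt0 ?exprn_gt0 // in N_ge.
set F := expR _ => sqr_le.
have N_gt0 : (0 < N)%N by near: N; apply: nbhs_infty_gt.
have dN_gt0 : 0 < d ^+ 2 * N%:R by rewrite mulr_gt0 ?exprn_gt0 ?ltr0n.
rewrite -(ler_pM2r dN_gt0); nra.
Unshelve. all: end_near.
Qed.

Theorem mainTheorem3 (R : realType) (q0 q1 : R) (NR : nat -> nat)
  (hq0 : 0 <= q0) (hq01 : q0 < q1) (hq1 : q1 <= 1)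
  (hNRpos : forall N, (0 < NR N)%N)
  (hNRO : exists C : nat, \forall N \near \oo, (NR N <= C * N)%N) :
  S_seq q0 q1 NR @ \oo --> (1 : R).
Proof.
pose p := (q0 + q1) / 2.
have p_gt0 : 0 < p by rewrite /p; lra.
have q0_01 : 0 <= q0 <= 1 by apply/andP; split; lra.
have q1_01 : 0 <= q1 <= 1 by apply/andP; split; lra.
have [||d0 d0_gt0 tail0] := @binom_upper_tail_expR_le R q0 p hq0; try (rewrite /p; lra).
have [||d1 d1_gt0 tail1] := @binom_lower_tail_expR_le R q1 p (ltW p_gt0); try (rewrite /p; lra).
have [C NR_le] := hNRO.
pose d := Num.min d0 d1.
have expR_le d' N : d <= d' -> expR (- (d' * N%:R)) <= expR (- (d * N%:R)).
  by move=> dd'; rewrite ler_expR lerN2 ler_wpM2r.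
apply: (@squeeze_cvgr _ _ _ _ (fun N => 1 - C.+1%:R * (N%:R * expR (- (d * N%:R))))
                             (fun=> 1)); last exact: cvg_cst.
  near=> N; apply/andP; split; last exact: S_seq_le1.
  apply: (S_seq_ge_expR q0_01 q1_01 p_gt0).
  - by near: N; apply: nbhs_infty_gt.
  - by near: N.
  - by apply: le_trans (tail1 N) (expR_le _ _ _); rewrite ge_min lexx orbT.
  - by apply: le_trans (tail0 N) (expR_le _ _ _); rewrite ge_min lexx.
rewrite -[X in _ --> X]subr0; apply: cvgB; first exact: cvg_cst.
rewrite -(mulr0 C.+1%:R); apply: cvgM; first exact: cvg_cst.
by apply: cvgn_mul_expRN; rewrite lt_min d0_gt0.
Unshelve. all: end_near.
Qed.
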